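(* There exist a $\{0,1\}$-valued sequence $(X_i)_{i\ge1}$ on a probability space, with $\mathcal{F}_n=\sigma(X_1,\dots,X_n)$, and a $[0,1]$-valued bounded $\mathcal{F}_n$-martingale $(\theta_n)_{n\ge0}$ that does not arise as the posterior mean $\mathbb{E}[\theta\mid\mathcal{F}_n]$ under any exchangeable Bernoulli law; that is, there is no exchangeable law on $\{0,1\}^{\mathbb{N}}$ with directing parameter $\theta$ for which $\theta_n=\mathbb{E}[\theta\mid X_1,\dots,X_n]$ (as a function of $X_1,\dots,X_n$) for all $n$.
   Context: An exchangeable Bernoulli law is the law of a $\{0,1\}$-valued sequence whose finite-dimensional distributions are invariant under permutations; by de Finetti's theorem it has a directing random variable $\theta\in[0,1]$ such that conditionally on $\theta$ the coordinates are i.i.d. $\mathrm{Bernoulli}(\theta)$. *)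

From HB Require Import structures.
From mathcomp Require Import all_boot all_order all_algebra.
From mathcomp Require Import all_classical all_reals all_analysis.
Set Implicit Arguments. Unset Strict Implicit. Unset Printing Implicit Defensive.
Import Order.TTheory GRing.Theory Num.Theory.
Local Open Scope classical_set_scope.
Local Open Scope ring_scope.

(* obs_prefix X n w = (X_1 w, ..., X_n w); in Rocq the sequence is indexed from 0,
   so X 0 plays the role of X_1. *)
Definition obs_prefix (T : Type) (X : nat -> T -> bool) (n : nat) (w : T)
  : n.-tuple bool := [tuple X i w | i < n].

Definition bool_process d (T : measurableType d) (X : nat -> T -> bool) :=
  forall i b, measurable [set w | X i w = b].

(* (th n) is an (F_n)-martingale, F_n = sigma(X_1,...,X_n).  The events of
   F_n are exactly the sets  obs_prefix X n @^-1` B,  B a subset of {0,1}^n. *)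
Definition bin_martingale d (T : measurableType d) (R : realType)
  (P : probability T R) (X : nat -> T -> bool) (th : nat -> T -> R) :=
  (forall n, exists g : n.-tuple bool -> R,
      forall w, th n w = g (obs_prefix X n w)) /\
  (forall n, P.-integrable setT (fun w => (th n w)%:E)) /\
  (forall n (B : set (n.-tuple bool)),
      (\int[P]_(w in obs_prefix X n @^-1` B) (th n.+1 w)%:E =
       \int[P]_(w in obs_prefix X n @^-1` B) (th n w)%:E)%E).

(* Exchangeable Bernoulli law with directing random variable Th: the
   sequence Y is, conditionally on Th (a [0,1]-valued random variable),
   i.i.d. *)
Definition exch_bernoulli d (T : measurableType d) (R : realType)
  (Q : probability T R) (Y : nat -> T -> bool) (Th : T -> R) :=
  bool_process Y /\ measurable_fun setT Th /\ (forall w, 0 <= Th w <= 1) /\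
  forall n (x : n.-tuple bool) (B : set R), measurable B ->
    Q (obs_prefix Y n @^-1` [set x] `&` Th @^-1` B) =
    (\int[Q]_(w in Th @^-1` B)
        (\prod_(i < n) (if tnth x i then Th w else 1 - Th w))%:E)%E.

(* g n is (a version of) the posterior mean E_Q[Th | Y_1..Y_n] as a function
   of (Y_1..Y_n): on every atom {Y_1..Y_n = x} of positive probability,
   E_Q[Th ; Y_1..Y_n = x] = g n x * Q(Y_1..Y_n = x). *)
Definition posterior_mean d (T : measurableType d) (R : realType)
  (Q : probability T R) (Y : nat -> T -> bool) (Th : T -> R)
  (g : forall n, n.-tuple bool -> R) :=
  forall n (x : n.-tuple bool), (0 < Q (obs_prefix Y n @^-1` [set x]))%E ->
    (\int[Q]_(w in obs_prefix Y n @^-1` [set x]) (Th w)%:E =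
     (g n x)%:E * Q (obs_prefix Y n @^-1` [set x]))%E.

From HB Require Import structures.
From mathcomp Require Import all_boot all_order all_algebra.
From mathcomp Require Import all_classical all_reals all_analysis.
From mathcomp Require Import ring lra.
From mathcomp Require Import measurable_realfun.
Set Implicit Arguments.
Unset Strict Implicit.
Unset Printing Implicit Defensive.

Import Order.TTheory GRing.Theory Num.Theory.
Local Open Scope classical_set_scope.
Local Open Scope ring_scope.

(* All observations are copies of one fair coin, X_i = X_1, with th_0 = 1/2 and
   th_n = 1 - X_1 for n >= 1: a bounded martingale since E[1 - X_1] = 1/2.
   Under an exchangeable Bernoulli law, Q(X_1 = 1, Th in B) = E[Th; Th in B],
   so Q(X_1 = 1) = E[Th] and E[Th; X_1 = 1] > 0 whenever E[Th] > 0.  Hence a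
   prior mean 1/2 forces a positive posterior mean after observing a 1,
   while th_1 = 0 there. *)

Lemma obs_prefix0 (T : Type) (X : nat -> T -> bool) (w : T) :
  obs_prefix X 0 w = [tuple].
Proof. exact: tuple0. Qed.

Lemma obs_prefix1 (T : Type) (X : nat -> T -> bool) (w : T) :
  obs_prefix X 1 w = [tuple X 0 w].
Proof. by apply: eq_from_tnth => i; rewrite (ord1 i) tnth_mktuple. Qed.

Lemma preimage_obs_prefix0 (T : Type) (X : nat -> T -> bool)
    (B : set (0.-tuple bool)) :
  B [tuple] -> obs_prefix X 0 @^-1` B = setT.
Proof. by move=> B0; apply/seteqP; split => w //= _; rewrite obs_prefix0. Qed.

Lemma preimage_obs_prefix1 (T : Type) (X : nat -> T -> bool) (b : bool) :
  obs_prefix X 1 @^-1` [set [tuple b]] = [set w | X 0 w = b].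
Proof.
by apply/seteqP; split => w /=; rewrite obs_prefix1; [case | move=> ->].
Qed.

Section exch_bernoulli_first_draw.
Context d (T : measurableType d) (R : realType).
Variables (Q : probability T R) (Y : nat -> T -> bool) (Th : T -> R).
Hypothesis QY : exch_bernoulli Q Y Th.

Let mTh : measurable_fun setT Th. Proof. by case: QY => _ []. Qed.

Let Th_ge0 w : 0 <= Th w. Proof. by case: QY => _ [_ [/(_ w)/andP[]]]. Qed.

Let mThpre B : measurable B -> measurable (Th @^-1` B).
Proof. by move=> mB; rewrite -[X in measurable X]setTI; exact: mTh. Qed.

Let mfirst_one : measurable [set w | Y 0 w = true].
Proof. by case: QY. Qed.

Lemma exch_bernoulli_first_oneE B : measurable B ->
  Q ([set w | Y 0 w = true] `&` Th @^-1` B) =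
  (\int[Q]_(w in Th @^-1` B) (Th w)%:E)%E.
Proof.
move=> mB; have [_ [_ [_ joint]]] := QY.
rewrite -preimage_obs_prefix1 joint//.
by apply: eq_integral => w _; rewrite big_ord1.
Qed.

Lemma exch_bernoulli_first_one_le c : 0 <= c ->
  (Q ([set w | Y 0 w = true] `&` Th @^-1` `]-oo, c[) <= c%:E)%E.
Proof.
move=> c0; have mB := mThpre (measurable_itv `]-oo, c[).
rewrite exch_bernoulli_first_oneE; last exact: measurable_itv.
apply: (@le_trans _ _ (\int[Q]_(w in Th @^-1` `]-oo, c[) c%:E)%E).
  apply: ge0_le_integral => //.
  - by move=> w _; rewrite lee_fin.
  - by apply/measurable_EFinP; exact: measurable_funTS.
  - by move=> w /=; rewrite in_itv /= lee_fin => /ltW.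
rewrite integral_cst// -[leRHS]mule1.
by apply: lee_wpmul2l; [rewrite lee_fin | exact: probability_le1].
Qed.

(* Markov's inequality at level c = Q(Y_0 = 1)/2: {Y_0 = 1} puts mass at most
   c on {Th < c}, hence at least c on {Th >= c}. *)
Lemma exch_bernoulli_first_one_mean_gt0 : (0 < Q [set w | Y 0 w = true])%E ->
  (0 < \int[Q]_(w in [set w | Y 0 w = true]) (Th w)%:E)%E.
Proof.
set A := [set w | Y 0 w = true] => QA0; have mA : measurable A := mfirst_one.
set c := fine (Q A) / 2.
have c0 : 0 < c by rewrite divr_gt0// -lte_fin fineK// fin_num_measure.
set B := Th @^-1` `]-oo, c[.
have mB : measurable B by apply: mThpre; exact: measurable_itv.
have mAIB : measurable (A `&` B) by exact: measurableI.
have mADB : measurable (A `\` B) by exact: measurableD.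
have QAD : fine (Q A) = fine (Q (A `\` B)) + fine (Q (A `&` B)).
  by rewrite -fineD ?fin_num_measure//; congr fine; exact: measureDI.
have QABc : fine (Q (A `&` B)) <= c.
  rewrite -lee_fin fineK ?fin_num_measure//.
  exact: exch_bernoulli_first_one_le (ltW c0).
have cQADB : c <= fine (Q (A `\` B)) by rewrite /c in QABc *; lra.
have markov : (c%:E * Q (A `\` B) <= \int[Q]_(w in A) (Th w)%:E)%E.
  have -> : A `\` B = A `&` [set w | c%:E <= `|(Th w)%:E|]%E.
    apply/seteqP; split => w [Aw]; rewrite /B /= in_itv /= lee_fin ger0_norm//.
    - by move/negP; rewrite -leNgt.
    - by rewrite leNgt => /negP.
  rewrite (eq_integral (fun w => `|(Th w)%:E|)%E).
    by apply: le_integral_abse => //; apply/measurable_funTS/measurable_EFinP.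
  by move=> w _; rewrite gee0_abs ?lee_fin.
apply: lt_le_trans markov.
rewrite -[X in (_ * X)%E]fineK ?fin_num_measure// -EFinM lte_fin.
by rewrite mulr_gt0// (lt_le_trans c0).
Qed.

Lemma posterior_mean_first_one_gt0 (g : forall n, n.-tuple bool -> R) :
  posterior_mean Q Y Th g -> 0 < g 0 [tuple] -> 0 < g 1 [tuple true].
Proof.
move=> post g00.
have QA : Q [set w | Y 0 w = true] = (g 0 [tuple])%:E.
  rewrite -[X in Q X]setIT -(preimage_setT Th) exch_bernoulli_first_oneE//.
  rewrite preimage_setT -(@preimage_obs_prefix0 _ Y [set [tuple]])// post;
    by rewrite preimage_obs_prefix0// probability_setT ?mule1 ?lte01.
have := exch_bernoulli_first_one_mean_gt0.
rewrite QA lte_fin -preimage_obs_prefix1 post preimage_obs_prefix1 QA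
  ?lte_fin//.
by move/(_ g00); rewrite pmulr_lgt0.
Qed.

End exch_bernoulli_first_draw.

Section fair_coin_model.
Variable R : realType.

Definition fair_coin : probability bool R := bernoulli_prob (2^-1).

Definition repeated_coin : nat -> bool -> bool := fun _ w => w.

Definition coin_martingale : nat -> bool -> R :=
  fun n w => if n is 0 then 2^-1 else (~~ w)%:R.

Lemma integral_fair_coin (f : bool -> R) : (forall w, 0 <= f w) ->
  (\int[fair_coin]_w (f w)%:E = (2^-1 * (f true + f false))%:E)%E.
Proof.
move=> f0; rewrite integral_bernoulli_prob//; last first.
  by rewrite invr_ge0 ler0n invf_le1 ?ler1n.
by rewrite /unstable.onem -!EFinM -EFinD; congr EFin; field.
Qed.

Lemma coin_martingale_01 n w : 0 <= coin_martingale n w <= 1.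
Proof.
case: n => [|n] /=; first by rewrite invr_ge0 ler0n invf_le1 ?ler1n.
by case: w; rewrite /= ?lexx ?ler01.
Qed.

Lemma coin_martingale_adapted n : exists g : n.-tuple bool -> R,
  forall w, coin_martingale n w = g (obs_prefix repeated_coin n w).
Proof.
case: n => [|n]; first by exists (fun=> 2^-1).
by exists (fun t => (~~ tnth t ord0)%:R) => w; rewrite tnth_mktuple.
Qed.

Lemma coin_martingale_integrable n :
  fair_coin.-integrable setT (fun w => (coin_martingale n w)%:E).
Proof.
apply: measurable_bounded_integrable => //.
  by rewrite [X in (X < _)%E]probability_setT ltry.
exists 1; split => // M M1 w _; apply: le_trans (ltW M1).
by have /andP[w0 w1] := coin_martingale_01 n w; rewrite ger0_norm.
Qed.

Lemma coin_martingale_step n (B : set (n.-tuple bool)) :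
  (\int[fair_coin]_(w in obs_prefix repeated_coin n @^-1` B)
     (coin_martingale n.+1 w)%:E =
   \int[fair_coin]_(w in obs_prefix repeated_coin n @^-1` B)
     (coin_martingale n w)%:E)%E.
Proof.
case: n B => [|//] B; have [B0|nB0] := pselect (B [tuple]).
- rewrite preimage_obs_prefix0//.
  have th_ge0 m w : 0 <= coin_martingale m w.
    by case/andP: (coin_martingale_01 m w).
  by rewrite !integral_fair_coin//=; congr EFin; field.
- have -> : obs_prefix repeated_coin 0 @^-1` B = set0.
    by apply/seteqP; split => w //=; rewrite obs_prefix0.
  by rewrite !integral_set0.
Qed.

Lemma coin_martingale_bin_martingale :
  bin_martingale fair_coin repeated_coin coin_martingale.
Proof.
split; first exact: coin_martingale_adapted.
by split; [exact: coin_martingale_integrable | exact: coin_martingale_step].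
Qed.

End fair_coin_model.

Theorem proposition3p8 (R : realType) :
  exists (d : measure_display) (T : measurableType d) (P : probability T R)
         (X : nat -> T -> bool) (th : nat -> T -> R),
    bool_process X /\
    (forall n w, 0 <= th n w <= 1) /\
    bin_martingale P X th /\
    forall g : forall n, n.-tuple bool -> R,
      (forall n w, th n w = g n (obs_prefix X n w)) ->
      forall (d' : measure_display) (T' : measurableType d')
             (Q : probability T' R) (Y : nat -> T' -> bool) (Th : T' -> R),
        exch_bernoulli Q Y Th -> ~ posterior_mean Q Y Th g.
Proof.
exists _, bool, (fair_coin R), repeated_coin, (coin_martingale R).
split; first by [].
split; first exact: coin_martingale_01.
split; first exact: coin_martingale_bin_martingale.
move=> g thg d' T' Q Y Th QY post.
have := posterior_mean_first_one_gt0 QY post.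
have <- : coin_martingale R 0 true = g 0 [tuple].
  by rewrite thg obs_prefix0.
have <- : coin_martingale R 1 true = g 1 [tuple true].
  by rewrite thg obs_prefix1.
by rewrite ltxx invr_gt0 ltr0n => /(_ isT).
Qed.
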